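(* Let $f(x)=a_nx^n+\dots+a_1x+a_0\in\mathbb{O}[x]$ with $n\ge1$ and $a_n\neq0$, where $\mathbb{O}$ is the real octonion algebra. Then every root $r\in\mathbb{O}$ of $f(x)$ and every root $r\in\mathbb{O}$ of $f'(x)$ satisfies $|r|<\widetilde R_1(f)=\frac{1}{|a_n|}\sqrt{|a_n|^2+|a_{n-1}|^2+\dots+|a_0|^2}$, $|r|<\widetilde R_2(f)=1+\frac{1}{|a_n|}\max_{0\le k\le n-1}|a_k|$, and $|r|\le\widetilde R_3(f)=\max\{1,\frac{1}{|a_n|}(|a_{n-1}|+\dots+|a_0|)\}$; i.e. $\rho(f),\rho(f')<\widetilde R_1(f)$, $\rho(f),\rho(f')<\widetilde R_2(f)$, $\rho(f),\rho(f')\le\widetilde R_3(f)$.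
   Context: $\mathbb{O}=(-1,-1,-1)_{\mathbb{R}}$ is the real Cayley--Dickson algebra obtained from $\mathbb{R}$ by three doublings $B\{\gamma\}=B\times B$, $(a,b)(c,d)=(ac+\gamma\bar d b,\ da+b\bar c)$, $\overline{(a,b)}=(\bar a,-b)$, with $\gamma=-1$. Norm $\mathrm{n}(\lambda)=\bar\lambda\lambda$ and $|\lambda|=\sqrt{\mathrm{n}(\lambda)}$ (Euclidean norm). $\mathbb{O}[x]=\mathbb{O}\otimes_{\mathbb{R}}\mathbb{R}[x]$ with central $x$; substitution $f(r)=\sum_k a_k(r^k)$; formal derivative $f'(x)=\sum_k ka_kx^{k-1}$. The spectral radius of $g$ is $\rho(g)=\sup\{|\lambda|:\lambda\in\mathbb{O},\ g(\lambda)=0\}$. *)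

From HB Require Import structures.
From mathcomp Require Import all_boot all_order all_algebra.
From mathcomp Require Import reals.
Set Implicit Arguments. Unset Strict Implicit. Unset Printing Implicit Defensive.
Import Order.TTheory GRing.Theory Num.Theory.
Local Open Scope ring_scope.

Record alg_ops (B : Type) := AlgOps {
  a_zero : B; a_one : B; a_add : B -> B -> B; a_opp : B -> B;
  a_mul : B -> B -> B; a_conj : B -> B }.

(* One Cayley--Dickson doubling B{gamma} with gamma = -1:
   (a,b)(c,d) = (ac + gamma * conj(d) b, da + b conj(c)),  conj(a,b) = (conj a, -b). *)
Definition cd_double (B : Type) (o : alg_ops B) : alg_ops (B * B) :=
  AlgOps (a_zero o, a_zero o) (a_one o, a_zero o)
    (fun x y => (a_add o x.1 y.1, a_add o x.2 y.2))
    (fun x => (a_opp o x.1, a_opp o x.2))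
    (fun x y => (a_add o (a_mul o x.1 y.1) (a_opp o (a_mul o (a_conj o y.2) x.2)),
                 a_add o (a_mul o y.2 x.1) (a_mul o x.2 (a_conj o y.1))))
    (fun x => (a_conj o x.1, a_opp o x.2)).

Definition real_ops (R : realType) : alg_ops R :=
  AlgOps 0 1 +%R -%R *%R id.

(* The real octonions O = (-1,-1,-1)_R : three doublings of R. *)
Definition oct (R : realType) : Type := ((R * R) * (R * R)) * ((R * R) * (R * R)).
Definition oct_ops (R : realType) : alg_ops (oct R) :=
  cd_double (cd_double (cd_double (real_ops R))).

Section Oct.
Variable R : realType.
Definition ozero : oct R := a_zero (oct_ops R).
Definition oone : oct R := a_one (oct_ops R).
Definition oadd : oct R -> oct R -> oct R := a_add (oct_ops R).
Definition omul : oct R -> oct R -> oct R := a_mul (oct_ops R).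
Definition oconj : oct R -> oct R := a_conj (oct_ops R).

Definition ore (x : oct R) : R := x.1.1.1.
(* norm n(lambda) = conj(lambda) lambda (a real scalar), |lambda| = sqrt(n(lambda)) *)
Definition onormsq (x : oct R) : R := ore (omul (oconj x) x).
Definition oabs (x : oct R) : R := Num.sqrt (onormsq x).

(* r^k, with r^0 = 1 and r^(k+1) = r r^k (O is power-associative) *)
Fixpoint opow (r : oct R) (k : nat) : oct R :=
  match k with O => oone | S k' => omul r (opow r k') end.

Definition omuln (a : oct R) (k : nat) : oct R := iter k (oadd a) ozero.

Definition opeval (n : nat) (a : nat -> oct R) (r : oct R) : oct R :=
  foldr oadd ozero [seq omul (a k) (opow r k) | k <- iota 0 n.+1].

(* coefficients of the formal derivative: f'(x) = sum_{k=0}^{n-1} (k+1) a_{k+1} x^k *)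
Definition oderiv_coef (a : nat -> oct R) : nat -> oct R :=
  fun k => omuln (a k.+1) k.+1.
End Oct.

From HB Require Import structures.
From mathcomp Require Import all_boot all_order all_algebra.
From mathcomp Require Import reals ring lra.
Import Order.TTheory GRing.Theory Num.Theory.
Local Open Scope ring_scope.

(* Octonion multiplication is norm-multiplicative (Degen's eight-square
   identity) and the norm is the Euclidean norm of the 8 coordinates, hence
   satisfies the triangle inequality.  So if [f(r) = 0] then
   [|a_n| |r|^n <= sum_(k<n) |a_k| |r|^k]; the same inequality follows for a
   root of [f'] after dividing out the weights [k+1 <= n] and multiplying by
   [|r|].  The three bounds then follow as for real polynomials:
   Cauchy-Schwarz and a geometric sum for the first, a geometric sum for the
   second, and [|r|^k <= |r|^(n-1)] (when [|r| > 1]) for the third. *)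

Section SumOfSquares.
Context {R : realDomainType}.

Lemma sumr_sqr_ge0 (I : Type) (r : seq I) (F : I -> R) : 0 <= \sum_(i <- r) F i ^+ 2.
Proof. by apply: sumr_ge0 => i _; exact: sqr_ge0. Qed.

Lemma cauchy_schwarz {I : finType} (F G : I -> R) :
  (\sum_i F i * G i) ^+ 2 <= (\sum_i F i ^+ 2) * (\sum_i G i ^+ 2).
Proof.
have [G0|G_neq0] := eqVneq (\sum_i G i ^+ 2) 0.
  have Gi0 i : G i = 0.
    apply/eqP; rewrite -sqrf_eq0; apply/eqP.
    by apply: psumr_eq0P G0 _ _ => // j _; exact: sqr_ge0.
  by rewrite G0 mulr0 big1 ?expr0n // => i _; rewrite Gi0 mulr0.
set A := \sum_i F i ^+ 2; set B := \sum_i G i ^+ 2; set C := \sum_i F i * G i.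
have expand (b c : R) :
    \sum_i (b * F i - c * G i) ^+ 2 = b ^+ 2 * A - 2 * b * c * C + c ^+ 2 * B.
  by rewrite /A /B /C !mulr_sumr -sumrB -big_split; apply: eq_bigr => i _ /=; ring.
have B_gt0 : 0 < B by rewrite lt_def G_neq0 sumr_sqr_ge0.
(* [0 <= sum (B F - C G)^2 = B (A B - C^2)] *)
have : 0 <= \sum_i (B * F i - C * G i) ^+ 2 by exact: sumr_sqr_ge0.
by rewrite expand; nra.
Qed.

End SumOfSquares.

Lemma sqrt_sum_sqrD {R : rcfType} {I : finType} (F G : I -> R) :
  Num.sqrt (\sum_i (F i + G i) ^+ 2) <=
  Num.sqrt (\sum_i F i ^+ 2) + Num.sqrt (\sum_i G i ^+ 2).
Proof.
have expand : \sum_i (F i + G i) ^+ 2 =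
    \sum_i F i ^+ 2 + \sum_i G i ^+ 2 + 2 * \sum_i F i * G i.
  by rewrite mulr_sumr -!big_split; apply: eq_bigr => i _ /=; ring.
have cross : \sum_i F i * G i <= Num.sqrt (\sum_i F i ^+ 2) * Num.sqrt (\sum_i G i ^+ 2).
  rewrite -sqrtrM ?sumr_sqr_ge0 //; apply: le_trans (ler_norm _) _.
  by rewrite -sqrtr_sqr ler_wsqrtr // cauchy_schwarz.
rewrite -[leRHS]ger0_norm ?addr_ge0 ?sqrtr_ge0 // -sqrtr_sqr.
rewrite ler_sqrt ?sqr_ge0 // expand sqrrD !sqr_sqrtr ?sumr_sqr_ge0 //.
lra.
Qed.

Section DominatedRoot.
Context {R : rcfType}.
Context {n : nat} {c : nat -> R} {A t : R}.
Hypotheses (A_gt0 : 0 < A) (c_ge0 : forall k, 0 <= c k) (t_ge0 : 0 <= t).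
Hypothesis dominant : A * t ^+ n.+1 <= \sum_(k < n.+1) c k * t ^+ k.

Lemma dominated_root_lt_sqrt_bound :
  t < Num.sqrt (\sum_(k < n.+1) c k ^+ 2 + A ^+ 2) / A.
Proof.
set C2 := \sum_(k < n.+1) c k ^+ 2; set T := t ^+ n.+1.
have C2_ge0 : 0 <= C2 by exact: sumr_sqr_ge0.
have S_gt0 : 0 < C2 + A ^+ 2 by rewrite ltr_wpDl // exprn_gt0.
rewrite ltr_pdivlMr // -[t * A]ger0_norm ?mulr_ge0 ?(ltW A_gt0) //.
rewrite -sqrtr_sqr ltr_sqrt // exprMn.
have [t_lt1|t_ge1] := ltrP t 1.
  have : t ^+ 2 < 1 by rewrite expr_lt1.
  have : 0 < A ^+ 2 by rewrite exprn_gt0.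
  nra.
set G2 := \sum_(k < n.+1) (t ^+ k) ^+ 2.
have AT_ge0 : 0 <= A * T by rewrite mulr_ge0 ?exprn_ge0 // ltW.
have CS : (A * T) ^+ 2 <= C2 * G2.
  apply: le_trans _ (cauchy_schwarz (fun k : 'I_n.+1 => c k) (fun k => t ^+ k)).
  by apply: lerXn2r; rewrite ?nnegrE // (le_trans AT_ge0 dominant).
have geom : (t ^+ 2 - 1) * G2 = T ^+ 2 - 1.
  rewrite /T exprAC [RHS]subrX1; congr (_ * _).
  by apply: eq_bigr => k _; exact: exprAC.
have T_ge1 : 1 <= T by rewrite exprn_ege1.
have C2_gt0 : 0 < C2.
  rewrite lt_def C2_ge0 andbT; apply: contraTneq CS => ->.
  by rewrite mul0r -ltNge exprn_gt0 // mulr_gt0 // (lt_le_trans ltr01).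
have scaled : A ^+ 2 * (t ^+ 2 - 1) * T ^+ 2 <= C2 * (T ^+ 2 - 1).
  have -> : A ^+ 2 * (t ^+ 2 - 1) * T ^+ 2 = (t ^+ 2 - 1) * (A * T) ^+ 2 by ring.
  by rewrite -geom [leRHS]mulrCA ler_wpM2l // subr_ge0 expr_ge1.
have : A ^+ 2 * (t ^+ 2 - 1) * T ^+ 2 < C2 * T ^+ 2 by lra.
rewrite ltr_pM2r ?exprn_gt0 ?(lt_le_trans ltr01) //; lra.
Qed.

Lemma dominated_root_lt_max_bound :
  t < 1 + (\big[Num.max/0]_(k < n.+1) c k) / A.
Proof.
set M := \big[Num.max/0]_(k < n.+1) c k.
have M_ge0 : 0 <= M by exact: bigmax_ge_id.
have MA_ge0 : 0 <= M / A by rewrite divr_ge0 // ltW.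
have [t_lt1|t_ge1] := ltrP t 1; first lra.
set G := \sum_(k < n.+1) t ^+ k; set T := t ^+ n.+1.
have dom_M : A * T <= M * G.
  apply: le_trans dominant _; rewrite mulr_sumr; apply: ler_sum => k _.
  by rewrite ler_wpM2r ?exprn_ge0 // le_bigmax.
have T_gt0 : 0 < T by rewrite exprn_gt0 // (lt_le_trans ltr01).
have M_gt0 : 0 < M.
  have MG_gt0 : 0 < M * G by apply: lt_le_trans dom_M; exact: mulr_gt0.
  rewrite lt_def M_ge0 andbT.
  by apply: contraTneq MG_gt0 => ->; rewrite mul0r ltxx.
have geom : A * (t - 1) * T <= M * (T - 1).
  have -> : M * (T - 1) = (t - 1) * (M * G) by rewrite /G /T subrX1; ring.
  have -> : A * (t - 1) * T = (t - 1) * (A * T) by ring.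
  by rewrite ler_wpM2l // subr_ge0.
have : A * (t - 1) < M by nra.
by rewrite -ltrBlDl ltr_pdivlMr // mulrC.
Qed.

Lemma dominated_root_le_sum_bound : t <= Num.max 1 ((\sum_(k < n.+1) c k) / A).
Proof.
rewrite le_max; have [//|t_gt1] /= := lerP t 1.
have sum_le : \sum_(k < n.+1) c k * t ^+ k <= (\sum_(k < n.+1) c k) * t ^+ n.
  rewrite mulr_suml; apply: ler_sum => k _; rewrite ler_wpM2l //.
  by rewrite ler_weXn2l ?(ltW t_gt1) // -ltnS.
have : (A * t) * t ^+ n <= (\sum_(k < n.+1) c k) * t ^+ n.
  by rewrite -mulrA -exprS; exact: le_trans dominant sum_le.
by rewrite ler_pM2r ?exprn_gt0 ?(lt_trans ltr01) // ler_pdivlMr // mulrC.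
Qed.

End DominatedRoot.

Section Octonions.
Context {R : realType}.
Implicit Types x y z : oct R.

Definition ocoord x (i : 'I_8) : R :=
  nth 0 [:: x.1.1.1; x.1.1.2; x.1.2.1; x.1.2.2; x.2.1.1; x.2.1.2; x.2.2.1; x.2.2.2] i.

Lemma onormsqE x : onormsq x = \sum_i ocoord x i ^+ 2.
Proof.
case: x => [[[x0 x1] [x2 x3]] [[x4 x5] [x6 x7]]].
by rewrite /onormsq /omul /oconj /ore !big_ord_recl big_ord0 /ocoord /=; ring.
Qed.

Lemma ocoord0 i : ocoord (ozero R) i = 0.
Proof. by case: i => [[|[|[|[|[|[|[|[|?]]]]]]]] ?]. Qed.

Lemma oaddr0 x : oadd x (ozero R) = x.
Proof. by case: x => [[[? ?] [? ?]] [[? ?] [? ?]]]; rewrite /oadd /= !addr0. Qed.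

Lemma ocoordD x y i : ocoord (oadd x y) i = ocoord x i + ocoord y i.
Proof.
case: x y => [[[? ?] [? ?]] [[? ?] [? ?]]] [[[? ?] [? ?]] [[? ?] [? ?]]].
by case: i => [[|[|[|[|[|[|[|[|?]]]]]]]] ?].
Qed.

Lemma ocoord_eq0 x : (forall i, ocoord x i = 0) -> x = ozero R.
Proof.
case: x => [[[x0 x1] [x2 x3]] [[x4 x5] [x6 x7]]] x_eq0.
move: (x_eq0 0) (x_eq0 1) (x_eq0 2%:R) (x_eq0 3%:R) (x_eq0 4%:R) (x_eq0 5%:R)
  (x_eq0 6%:R) (x_eq0 7%:R).
by rewrite /ocoord /= => -> -> -> -> -> -> -> ->.
Qed.

Lemma oabs0 : oabs (ozero R) = 0.
Proof. by rewrite /oabs onormsqE big1 ?sqrtr0 // => i _; rewrite ocoord0 expr0n. Qed.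

Lemma oabs_ge0 x : 0 <= oabs x.
Proof. exact: sqrtr_ge0. Qed.

Lemma oabs_gt0 x : x <> ozero R -> 0 < oabs x.
Proof.
move=> x_neq0; rewrite sqrtr_gt0 lt_def onormsqE sumr_sqr_ge0 andbT.
apply: contra_notN x_neq0 => /eqP sum0; apply: ocoord_eq0 => i.
apply/eqP; rewrite -sqrf_eq0; apply/eqP.
by apply: psumr_eq0P sum0 _ _ => // j _; exact: sqr_ge0.
Qed.

Lemma oabs_mul x y : oabs (omul x y) = oabs x * oabs y.
Proof.
rewrite /oabs -sqrtrM; last by rewrite onormsqE sumr_sqr_ge0.
case: x y => [[[? ?] [? ?]] [[? ?] [? ?]]] [[[? ?] [? ?]] [[? ?] [? ?]]].
by rewrite /onormsq /omul /oconj /ore /=; congr Num.sqrt; ring.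
Qed.

Lemma oabs_opow x k : oabs (opow x k) = oabs x ^+ k.
Proof.
elim: k => [|k IHk] /=; last by rewrite oabs_mul IHk exprS.
by rewrite /oabs onormsqE !big_ord_recl big_ord0 /ocoord /= expr1n expr0n !addr0 sqrtr1.
Qed.

Lemma ocoord_muln x k i : ocoord (omuln x k) i = k%:R * ocoord x i.
Proof.
elim: k => [|k IHk]; first by rewrite mul0r ocoord0.
by rewrite /omuln iterS -/(omuln x k) ocoordD IHk -add1n natrD mulrDl mul1r.
Qed.

Lemma oabs_muln x k : oabs (omuln x k) = k%:R * oabs x.
Proof.
rewrite /oabs !onormsqE.
under eq_bigr do rewrite ocoord_muln exprMn.
by rewrite -mulr_sumr sqrtrM ?sqr_ge0 // sqrtr_sqr normr_nat.
Qed.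

Lemma oabs_le_addl x y : oabs y <= oabs (oadd x y) + oabs x.
Proof.
rewrite /oabs !onormsqE.
have := sqrt_sum_sqrD (fun i => ocoord (oadd x y) i) (fun i => - ocoord x i).
have -> : \sum_i (ocoord (oadd x y) i + - ocoord x i) ^+ 2 = \sum_i ocoord y i ^+ 2.
  by apply: eq_bigr => i _; rewrite ocoordD addrC addKr.
by under [\sum_i (- _) ^+ 2]eq_bigr do rewrite sqrrN.
Qed.

Lemma oabs_foldr_le z (s : seq (oct R)) :
  oabs z <= oabs (foldr (@oadd R) z s) + \sum_(x <- s) oabs x.
Proof.
elim: s => [|x s IHs] /=; first by rewrite big_nil addr0.
rewrite big_cons; have := oabs_le_addl x (foldr (@oadd R) z s); lra.
Qed.

Lemma opeval_root_dominant n (a : nat -> oct R) r : opeval n a r = ozero R ->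
  oabs (a n) * oabs r ^+ n <= \sum_(k < n) oabs (a k) * oabs r ^+ k.
Proof.
rewrite /opeval -addn1 iotaD map_cat foldr_cat /= add0n => root.
have := oabs_foldr_le (oadd (omul (a n) (opow r n)) (ozero R))
  [seq omul (a k) (opow r k) | k <- iota 0 n].
rewrite root oabs0 add0r oaddr0 oabs_mul oabs_opow big_map.
rewrite -(big_mkord xpredT (fun k => oabs (a k) * oabs r ^+ k)) /index_iota subn0.
by under eq_bigr do rewrite oabs_mul oabs_opow.
Qed.

Lemma oderiv_root_dominant n (a : nat -> oct R) r : opeval n (oderiv_coef a) r = ozero R ->
  oabs (a n.+1) * oabs r ^+ n.+1 <= \sum_(k < n.+1) oabs (a k) * oabs r ^+ k.
Proof.
move/opeval_root_dominant; rewrite /oderiv_coef oabs_muln.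
set t := oabs r => root.
have t_ge0 : 0 <= t by exact: oabs_ge0.
have weights : \sum_(k < n) oabs (omuln (a k.+1) k.+1) * t ^+ k <=
    n.+1%:R * \sum_(k < n) oabs (a k.+1) * t ^+ k.
  rewrite mulr_sumr; apply: ler_sum => k _.
  rewrite oabs_muln mulrA ler_wpM2r ?exprn_ge0 // ler_wpM2r ?oabs_ge0 //.
  by rewrite ler_nat ltnS ltnW.
have lead : oabs (a n.+1) * t ^+ n <= \sum_(k < n) oabs (a k.+1) * t ^+ k.
  by rewrite -(ler_pM2l (ltr0Sn _ n)) mulrA (le_trans root weights).
rewrite big_ord_recl expr0 mulr1 exprSr mulrA.
apply: le_trans (ler_wpM2r t_ge0 lead) _.
rewrite mulr_suml ler_wpDl ?oabs_ge0 //.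
by apply: ler_sum => k _; rewrite /= exprSr mulrA.
Qed.

End Octonions.

Theorem corollary4p15 (R : realType) (n : nat) (a : nat -> oct R)
  (hn : (1 <= n)%N) (han : a n <> ozero R) (r : oct R) :
  (opeval n a r = ozero R \/ opeval n.-1 (oderiv_coef a) r = ozero R) ->
  [/\ oabs r < Num.sqrt (\sum_(k < n.+1) oabs (a k) ^+ 2) / oabs (a n),
      oabs r < 1 + (\big[Num.max/0]_(k < n) oabs (a k)) / oabs (a n)
    & oabs r <= Num.max 1 ((\sum_(k < n) oabs (a k)) / oabs (a n))].
Proof.
case: n hn han => [//|n] _ an_neq0 root.
pose c k := oabs (a k).
have dominant : c n.+1 * oabs r ^+ n.+1 <= \sum_(k < n.+1) c k * oabs r ^+ k.
  by case: root => [/opeval_root_dominant|/oderiv_root_dominant].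
have an_gt0 : 0 < c n.+1 by exact: oabs_gt0.
have r_ge0 := oabs_ge0 r.
rewrite big_ord_recr /=; split.
- exact: dominated_root_lt_sqrt_bound an_gt0 r_ge0 dominant.
- exact: dominated_root_lt_max_bound an_gt0 r_ge0 dominant.
- exact: dominated_root_le_sum_bound an_gt0 (fun k => oabs_ge0 (a k)) dominant.
Qed.
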